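(* Let $M$ and $N$ be objects of an abelian category $\mathcal{A}$, let $M'$ be a direct summand of $M$ and $N'$ a direct summand of $N$. (1) If $N$ is strongly $M$-Rickart, then $N'$ is strongly $M'$-Rickart. (2) If $N$ is dual strongly $M$-Rickart, then $N'$ is dual strongly $M'$-Rickart.
   Context: A morphism $f:X\to Y$ is a section if $f'f=1_X$ for some $f'$, a retraction if $ff'=1_Y$ for some $f'$. A monomorphism $k:K\to X$ is fully invariant if for every $h:X\to X$ there is $\alpha:K\to K$ with $hk=k\alpha$; an epimorphism $c:X\to C$ is fully coinvariant if for every $h:X\to X$ there is $\gamma:C\to C$ with $ch=\gamma c$. For objects $M,N$: $N$ is strongly $M$-Rickart if the kernel of every morphism $f:M\to N$ is a fully invariant section; $N$ is dual strongly $M$-Rickart if the cokernel of every morphism $f:M\to N$ is a fully coinvariant retraction. *)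

From HB Require Import structures.
From mathcomp Require Import all_boot all_algebra.
Set Implicit Arguments. Unset Strict Implicit. Unset Printing Implicit Defensive.
Import GRing.Theory.
Local Open Scope ring_scope.

(* Preadditive category: hom-sets are abelian groups, composition is bilinear.
   [comp g f] is the composite "g f" (first f, then g). *)
Record PreaddCat := {
  Ob :> Type;
  Hom : Ob -> Ob -> zmodType;
  comp : forall X Y Z : Ob, Hom Y Z -> Hom X Y -> Hom X Z;
  idm : forall X : Ob, Hom X X;
  compA : forall X Y Z W (h : Hom Z W) (g : Hom Y Z) (f : Hom X Y),
      comp h (comp g f) = comp (comp h g) f;
  comp1m : forall X Y (f : Hom X Y), comp (idm Y) f = f;
  compm1 : forall X Y (f : Hom X Y), comp f (idm X) = f;
  compDl : forall X Y Z (g g' : Hom Y Z) (f : Hom X Y),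
      comp (g + g') f = comp g f + comp g' f;
  compDr : forall X Y Z (g : Hom Y Z) (f f' : Hom X Y),
      comp g (f + f') = comp g f + comp g f'
}.
Arguments comp {p X Y Z}.
Arguments idm {p}.

Section Defs.
Variable C : PreaddCat.

Definition mono {X Y : C} (f : Hom X Y) :=
  forall Z (g h : Hom Z X), comp f g = comp f h -> g = h.
Definition epi {X Y : C} (f : Hom X Y) :=
  forall Z (g h : Hom Y Z), comp g f = comp h f -> g = h.

Definition section {X Y : C} (f : Hom X Y) := exists f' : Hom Y X, comp f' f = idm X.
Definition retraction {X Y : C} (f : Hom X Y) := exists f' : Hom Y X, comp f f' = idm Y.

Definition is_kernel {X Y K : C} (f : Hom X Y) (k : Hom K X) :=
  comp f k = 0 /\
  forall Z (g : Hom Z X), comp f g = 0 -> exists! u : Hom Z K, comp k u = g.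
Definition is_cokernel {X Y Q : C} (f : Hom X Y) (c : Hom Y Q) :=
  comp c f = 0 /\
  forall Z (g : Hom Y Z), comp g f = 0 -> exists! u : Hom Q Z, comp u c = g.

Definition is_zero_object (Z : C) :=
  (forall X (f : Hom Z X), f = 0) /\ (forall X (f : Hom X Z), f = 0).

Definition is_biproduct {X Y S : C} (i1 : Hom X S) (i2 : Hom Y S)
  (p1 : Hom S X) (p2 : Hom S Y) :=
  [/\ comp p1 i1 = idm X, comp p2 i2 = idm Y, comp p1 i2 = 0, comp p2 i1 = 0
    & comp i1 p1 + comp i2 p2 = idm S].

Definition abelian :=
  (exists Z : C, is_zero_object Z) /\
  [/\ 
(forall X Y : C, exists S (i1 : Hom X S) (i2 : Hom Y S) p1 p2,
        is_biproduct i1 i2 p1 p2),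
      (forall (X Y : C) (f : Hom X Y), exists K (k : Hom K X), is_kernel f k),
      (forall (X Y : C) (f : Hom X Y), exists Q (c : Hom Y Q), is_cokernel f c),
      (forall (X Y : C) (f : Hom X Y), mono f -> exists Z (g : Hom Y Z), is_kernel g f)
    & (forall (X Y : C) (f : Hom X Y), epi f -> exists Z (g : Hom Z X), is_cokernel g f)].

Definition direct_summand (M' M : C) :=
  exists (M'' : C) (i1 : Hom M' M) (i2 : Hom M'' M) p1 p2, is_biproduct i1 i2 p1 p2.

Definition fully_invariant {K X : C} (k : Hom K X) :=
  mono k /\ forall h : Hom X X, exists a : Hom K K, comp h k = comp k a.
Definition fully_coinvariant {X Q : C} (c : Hom X Q) :=
  epi c /\ forall h : Hom X X, exists g : Hom Q Q, comp c h = comp g c.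

(* N is strongly M-Rickart: the kernel of every f : M -> N is a fully invariant section *)
Definition strongly_rickart (M N : C) :=
  forall (f : Hom M N) (K : C) (k : Hom K M), is_kernel f k ->
    fully_invariant k /\ section k.
(* N is dual strongly M-Rickart: the cokernel of every f : M -> N is a fully
   coinvariant retraction *)
Definition dual_strongly_rickart (M N : C) :=
  forall (f : Hom M N) (Q : C) (c : Hom N Q), is_cokernel f c ->
    fully_coinvariant c /\ retraction c.
End Defs.

From Pilot Require
Import Defs.
From mathcomp Require Import all_boot all_algebra.
Import Defs.
Set Implicit Arguments. Unset Strict Implicit. Unset Printing Implicit Defensive.
Import GRing.Theory.
Local Open Scope ring_scope.

(* Only the retraction halves [p i = 1] of the two direct-sum decompositions
   matter.  For [f' : M' -> N'] put [f := j f' p : M -> N]; then the kernel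
   [k'] of [f'] and the kernel [k] of [f] factor through each other
   ([k u = i k'], [k' v = p k], hence [v u = 1]), and full invariance and
   splitting of [k] pass to [k'] by conjugating with [u], [v], [i], [p].
   Part (2) is part (1) in the opposite category, where cokernels become
   kernels and the dual notions become the original ones. *)

Lemma comp0m (C : PreaddCat) (X Y Z : C) (f : Hom X Y) :
  comp (0 : Hom Y Z) f = 0.
Proof.
have := compDl (0 : Hom Y Z) 0 f; rewrite addr0 => /eqP.
by rewrite -subr_eq subrr => /eqP.
Qed.

Lemma compm0 (C : PreaddCat) (X Y Z : C) (g : Hom Y Z) :
  comp g (0 : Hom X Y) = 0.
Proof.
have := compDr g (0 : Hom X Y) 0; rewrite addr0 => /eqP.
by rewrite -subr_eq subrr => /eqP.
Qed.

Lemma kernel_mono (C : PreaddCat) (X Y K : C) (f : Hom X Y) (k : Hom K X) :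
  is_kernel f k -> mono k.
Proof.
move=> [fk0 kerk] Z g h kg_kh.
have fkg0 : comp f (comp k g) = 0 by rewrite compA fk0 comp0m.
have [w [_ w_uniq]] := kerk Z _ fkg0.
by rewrite -(w_uniq g erefl) (w_uniq h (esym kg_kh)).
Qed.

Definition has_kernels (C : PreaddCat) :=
  forall (X Y : C) (f : Hom X Y), exists K (k : Hom K X), is_kernel f k.

Lemma abelian_has_kernels (C : PreaddCat) : abelian C -> has_kernels C.
Proof. by case=> _ [_ kerC _ _ _]. Qed.

Lemma direct_summand_retract (C : PreaddCat) (M' M : C) :
  direct_summand M' M -> exists (i : Hom M' M) (p : Hom M M'), comp p i = idm M'.
Proof. by move=> [_ [i [_ [p [_ [pi _ _ _ _]]]]]]; exists i, p. Qed.

Section KernelOfRetract.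
Variables (C : PreaddCat) (M M' K K' : C).
Variables (i : Hom M' M) (p : Hom M M') (k : Hom K M) (k' : Hom K' M').
Variables (u : Hom K' K) (v : Hom K K').
Hypotheses (pi : comp p i = idm M') (k'_mono : mono k').
Hypotheses (ku : comp k u = comp i k') (k'v : comp k' v = comp p k).

Lemma retract_kernel_vu : comp v u = idm K'.
Proof.
by apply: k'_mono; rewrite compA k'v -compA ku compA pi comp1m compm1.
Qed.

Lemma fully_invariant_retract : fully_invariant k -> fully_invariant k'.
Proof.
move=> [_ k_inv]; split=> // h.
have [a ha] := k_inv (comp i (comp h p)).
exists (comp v (comp a u)).
rewrite compA k'v -compA (compA k) -ha -!compA ku.
by rewrite (compA p i) pi comp1m (compA p i) pi comp1m.
Qed.

Lemma section_retract : section k -> section k'.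
Proof.
move=> [r rk]; exists (comp v (comp r i)).
by rewrite -!compA -ku (compA r) rk comp1m retract_kernel_vu.
Qed.

End KernelOfRetract.

Lemma strongly_rickart_retract (C : PreaddCat) (M N M' N' : C)
    (i : Hom M' M) (p : Hom M M') (j : Hom N' N) (q : Hom N N') :
  has_kernels C -> comp p i = idm M' -> comp q j = idm N' ->
  strongly_rickart M N -> strongly_rickart M' N'.
Proof.
move=> kerC pi qj srMN f' K' k' kerk'.
have [K [k kerk]] := kerC _ _ (comp j (comp f' p)).
have [k_inv k_sec] := srMN _ _ _ kerk.
have fik'0 : comp (comp j (comp f' p)) (comp i k') = 0.
  by rewrite -!compA (compA p) pi comp1m kerk'.1 compm0.
have [u [ku _]] := kerk.2 _ _ fik'0.
have f'pk0 : comp f' (comp p k) = 0.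
  have := congr1 (comp q) kerk.1.
  by rewrite compm0 -!compA (compA q) qj comp1m.
have [v [k'v _]] := kerk'.2 _ _ f'pk0.
have k'_mono := kernel_mono kerk'.
split; [exact: (fully_invariant_retract pi k'_mono ku k'v)
       | exact: (section_retract pi k'_mono ku k'v)].
Qed.

Definition opposite (C : PreaddCat) : PreaddCat :=
  {| Ob := C;
     Hom X Y := Hom Y X;
     comp X Y Z g f := comp f g;
     idm := @idm C;
     compA X Y Z W h g f := esym (compA f g h);
     comp1m X Y f := compm1 f;
     compm1 X Y f := comp1m f;
     compDl X Y Z g g' f := compDr f g g';
     compDr X Y Z g f f' := compDl f f' g |}.

Lemma abelian_has_kernels_opposite (C : PreaddCat) :
  abelian C -> has_kernels (opposite C).
Proof. by case=> _ [_ _ cokerC _ _] X Y f; exact: cokerC Y X f. Qed.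

Lemma dual_strongly_rickart_opposite (C : PreaddCat) (M N : C) :
  dual_strongly_rickart M N = @strongly_rickart (opposite C) N M.
Proof. by []. Qed.

Theorem corollary2p18 (C : PreaddCat) (HC : abelian C) (M N M' N' : C) :
  direct_summand M' M -> direct_summand N' N ->
  (strongly_rickart M N -> strongly_rickart M' N') /\
  (dual_strongly_rickart M N -> dual_strongly_rickart M' N').
Proof.
move=> /direct_summand_retract [i [p pi]] /direct_summand_retract [j [q qj]].
split.
- exact: strongly_rickart_retract (abelian_has_kernels HC) pi qj.
- rewrite !dual_strongly_rickart_opposite.
  exact: (@strongly_rickart_retract (opposite C) N M N' M' q j p i
            (abelian_has_kernels_opposite HC) qj pi).
Qed.
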